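(* Let $m\geq 1$ be an integer. For all integers $n\geq 1$ and all real $x,y\in(0,\pi)$, $$\sum_{k=0}^n \binom{n-k+m}{m}\frac{\sin((2k+1)x)\,\sin((2k+1)y)}{2k+1}>0.$$ The lower bound $0$ is sharp. *)

From Stdlib Require Export Reals.
Open Scope R_scope.

Definition Ssum (m n : nat) (x y : R) : R :=
  sum_f_R0 (fun k : nat =>
    C (n - k + m) m * sin (INR (2 * k + 1) * x) * sin (INR (2 * k + 1) * y)
      / INR (2 * k + 1)) n.

(* Write c_k = C(n-k+m,m) and F(t) = sum_k c_k cos((2k+1)t)/(2k+1).  By the
   product-to-sum formula, S(x,y) = (F(x-y) - F(x+y))/2, and F' = -G with
   G(t) = sum_k c_k sin((2k+1)t).  Abel summation together with the identity
   sin t * sum_{i<=k} sin((2i+1)t) = sin^2((k+1)t) writes sin t * G(t) as a sum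
   of nonnegative terms, the first of which is (c_0 - c_1) sin^2 t > 0; since the
   binomial weights are nonincreasing with c_0 > c_1 (Pascal's rule), G > 0 on
   (0,pi).  Hence F is strictly decreasing on [0,pi]; as F is even and satisfies
   F(2pi - t) = F(t), we get F(x+y) < F(x-y) for x, y in (0,pi).
   Sharpness: for n = 1 and x = y = d, S is O(d^2), so it tends to 0 as d -> 0. *)

From Stdlib Require Import Reals Lra Lia.
From Coquelicot Require Import Coquelicot.
Open Scope R_scope.

Definition cos_sum (c : nat -> R) (b : nat -> nat) (N : nat) (t : R) : R :=
  sum_f_R0 (fun k => c k * cos (INR (b k) * t) / INR (b k)) N.

Definition sin_sum (c : nat -> R) (b : nat -> nat) (N : nat) (t : R) : R :=
  sum_f_R0 (fun k => c k * sin (INR (b k) * t)) N.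

Section CosineSums.

Variables (c : nat -> R) (b : nat -> nat) (N : nat).

Lemma cos_sum_even (t : R) : cos_sum c b N (- t) = cos_sum c b N t.
Proof.
  apply sum_eq; intros k _.
  now rewrite <- Ropp_mult_distr_r, cos_neg.
Qed.

(* F is symmetric about pi, because the frequencies are integers. *)
Lemma cos_sum_reflect (t : R) : cos_sum c b N (2 * PI - t) = cos_sum c b N t.
Proof.
  apply sum_eq; intros k _.
  replace (INR (b k) * (2 * PI - t))
    with (- (INR (b k) * t) + 2 * INR (b k) * PI) by ring.
  now rewrite cos_period, cos_neg.
Qed.

Hypothesis b_nonzero : forall k, b k <> 0%nat.

Lemma INR_b_nonzero (k : nat) : INR (b k) <> 0.
Proof. now apply not_0_INR. Qed.

Lemma cos_sum_derivative (t : R) :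
  derivable_pt_lim (cos_sum c b N) t (- sin_sum c b N t).
Proof.
  apply is_derive_Reals; unfold cos_sum, sin_sum.
  induction N as [|M IH]; simpl.
  - auto_derive; auto. field. apply INR_b_nonzero.
  - replace (- (sum_f_R0 (fun k => c k * sin (INR (b k) * t)) M
                + c (S M) * sin (INR (b (S M)) * t)))
      with (- sum_f_R0 (fun k => c k * sin (INR (b k) * t)) M
            + - (c (S M) * sin (INR (b (S M)) * t))) by ring.
    apply (is_derive_plus
             (fun t => sum_f_R0 (fun k => c k * cos (INR (b k) * t) / INR (b k)) M)
             (fun t => c (S M) * cos (INR (b (S M)) * t) / INR (b (S M))));
      [exact IH|].
    auto_derive; auto. field. apply INR_b_nonzero.
Qed.

(* Product-to-sum: the bilinear sine sum is a difference of two values of F. *)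
Lemma sin_sin_sum_as_cos_sum (x y : R) :
  sum_f_R0 (fun k => c k * sin (INR (b k) * x) * sin (INR (b k) * y)
                     / INR (b k)) N
  = (cos_sum c b N (x - y) - cos_sum c b N (x + y)) / 2.
Proof.
  unfold cos_sum.
  assert (term : forall k,
    c k * sin (INR (b k) * x) * sin (INR (b k) * y) / INR (b k) =
    (c k * cos (INR (b k) * (x - y)) / INR (b k)
     - c k * cos (INR (b k) * (x + y)) / INR (b k)) / 2).
  { intros k.
    rewrite Rmult_minus_distr_l, Rmult_plus_distr_l, cos_minus, cos_plus.
    field. apply INR_b_nonzero. }
  induction N as [|M IH]; simpl.
  - apply term.
  - rewrite IH, term. field. apply INR_b_nonzero.
Qed.

End CosineSums.

Lemma abel_summation (c a : nat -> R) (N : nat) :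
  sum_f_R0 (fun k => c k * a k) N =
  sum_f_R0 (fun k => (c k - c (S k)) * sum_f_R0 a k) N + c (S N) * sum_f_R0 a N.
Proof.
  induction N as [|N IH]; simpl; [ring|].
  rewrite IH. ring.
Qed.

Lemma sum_ge_first_term (f : nat -> R) (N : nat) :
  (forall k, (k <= N)%nat -> 0 <= f k) -> f 0%nat <= sum_f_R0 f N.
Proof.
  induction N as [|N IH]; intros f_nonneg; simpl; [lra|].
  assert (f 0%nat <= sum_f_R0 f N) by (apply IH; intros; apply f_nonneg; lia).
  assert (0 <= f (S N)) by (apply f_nonneg; lia).
  lra.
Qed.

Lemma sin_odd_partial_sum (t : R) (k : nat) :
  sin t * sum_f_R0 (fun i => sin (INR (2 * i + 1) * t)) k
  = sin (INR (k + 1) * t) ^ 2.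
Proof.
  induction k as [|k IH].
  - simpl. rewrite Rmult_1_l. ring.
  - rewrite tech5, Rmult_plus_distr_l, IH.
    set (X := INR (k + 1) * t).
    replace (INR (2 * S k + 1) * t) with (X + X + t)
      by (unfold X; rewrite !plus_INR, !mult_INR, !S_INR, INR_0; ring).
    replace (INR (S k + 1) * t) with (X + t)
      by (unfold X; rewrite !plus_INR, !S_INR, INR_0; ring).
    rewrite !sin_plus, cos_plus.
    pose proof (sin2_cos2 t) as pythagoras. unfold Rsqr in pythagoras.
    assert (E : (sin X * cos t + cos X * sin t) ^ 2 -
      (sin X ^ 2 + sin t * ((sin X * cos X + cos X * sin X) * cos t
                            + (cos X * cos X - sin X * sin X) * sin t))
      = sin X ^ 2 * (sin t * sin t + cos t * cos t - 1)) by ring.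
    rewrite pythagoras in E. lra.
Qed.

Lemma odd_sine_sum_pos (c : nat -> R) (N : nat) (t : R) :
  (forall k, (k <= N)%nat -> c (S k) <= c k) -> 0 <= c (S N) ->
  c 1%nat < c 0%nat -> 0 < t < PI ->
  0 < sum_f_R0 (fun k => c k * sin (INR (2 * k + 1) * t)) N.
Proof.
  intros c_noninc c_last_nonneg c_first_drop t_range.
  assert (sin_t_pos : 0 < sin t) by (apply sin_gt_0; lra).
  set (a := fun k => sin t * sin (INR (2 * k + 1) * t)).
  assert (partial_a : forall k, sum_f_R0 a k = sin (INR (k + 1) * t) ^ 2).
  { intros k. rewrite <- sin_odd_partial_sum, scal_sum.
    apply sum_eq; intros; unfold a; ring. }
  apply (Rmult_lt_reg_l (sin t)); [exact sin_t_pos|].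
  rewrite Rmult_0_r, scal_sum.
  replace (sum_f_R0 (fun k => c k * sin (INR (2 * k + 1) * t) * sin t) N)
    with (sum_f_R0 (fun k => c k * a k) N) by (apply sum_eq; intros; unfold a; ring).
  rewrite abel_summation.
  assert (first_pos : 0 < (c 0%nat - c 1%nat) * sum_f_R0 a 0).
  { rewrite partial_a. simpl (INR (0 + 1)). rewrite Rmult_1_l.
    apply Rmult_lt_0_compat; [lra | now apply pow_lt]. }
  assert (first_le : (c 0%nat - c 1%nat) * sum_f_R0 a 0
                     <= sum_f_R0 (fun k => (c k - c (S k)) * sum_f_R0 a k) N).
  { apply (sum_ge_first_term (fun k => (c k - c (S k)) * sum_f_R0 a k)).
    intros k Hk. rewrite partial_a.
    apply Rmult_le_pos; [specialize (c_noninc k Hk); lra | apply pow2_ge_0]. }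
  assert (0 <= c (S N) * sum_f_R0 a N)
    by (rewrite partial_a; apply Rmult_le_pos; [exact c_last_nonneg | apply pow2_ge_0]).
  lra.
Qed.

Lemma strict_decrease_of_neg_derivative (F G : R -> R) (u v : R) :
  (forall t, derivable_pt_lim F t (- G t)) ->
  (forall t, u < t < v -> 0 < G t) -> u < v -> F v < F u.
Proof.
  intros F_deriv G_pos u_lt_v.
  set (pr := fun t => exist (fun l => derivable_pt_lim F t l) (- G t) (F_deriv t)
             : derivable_pt F t).
  destruct (MVT_cor1 F u v pr u_lt_v) as [t [mvt t_range]].
  assert (slope : derive_pt F t (pr t) = - G t) by (apply derive_pt_eq_0, F_deriv).
  rewrite slope in mvt.
  assert (0 < G t * (v - u)) by (apply Rmult_lt_0_compat; [apply G_pos | ]; lra).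
  lra.
Qed.

Lemma even_reflect_decreasing_gap (F : R -> R) (x y : R) :
  (forall t, F (- t) = F t) -> (forall t, F (2 * PI - t) = F t) ->
  (forall u v, 0 <= u -> u < v -> v <= PI -> F v < F u) ->
  0 < x < PI -> 0 < y < PI -> F (x + y) < F (x - y).
Proof.
  intros F_even F_reflect F_decr x_range y_range.
  (* Replace x - y by |x - y|, which lies below both x + y and 2pi - (x + y). *)
  assert (abs_diff : exists u, F (x - y) = F u /\ 0 <= u /\ u < x + y
                               /\ u < 2 * PI - (x + y)).
  { destruct (Rle_lt_dec y x).
    - exists (x - y). repeat split; lra.
    - exists (y - x). split; [|lra].
      replace (x - y) with (- (y - x)) by ring. apply F_even. }
  destruct abs_diff as [u [-> u_bounds]].
  destruct (Rle_lt_dec (x + y) PI).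
  - apply F_decr; lra.
  - rewrite <- F_reflect. apply F_decr; lra.
Qed.

Definition binom_weight (m n k : nat) : R := Binomial.C (n - k + m) m.

Lemma C_pos (n p : nat) : 0 < Binomial.C n p.
Proof.
  unfold Binomial.C. apply Rdiv_lt_0_compat; [apply INR_fact_lt_0|].
  apply Rmult_lt_0_compat; apply INR_fact_lt_0.
Qed.

Lemma C_step (j m : nat) :
  (1 <= m)%nat -> Binomial.C (S j + m) m - Binomial.C (j + m) m = Binomial.C (j + m) (m - 1).
Proof.
  intros Hm. destruct m as [|m]; [lia|].
  replace (S m - 1)%nat with m by lia.
  change (S j + S m)%nat with (S (j + S m)).
  rewrite <- (pascal (j + S m) m) by lia. ring.
Qed.

Lemma binom_weight_noninc (m n k : nat) :
  (1 <= m)%nat -> binom_weight m n (S k) <= binom_weight m n k.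
Proof.
  intros Hm. unfold binom_weight.
  destruct (Compare_dec.le_lt_dec n k).
  - replace (n - S k)%nat with (n - k)%nat by lia. lra.
  - replace (n - k)%nat with (S (n - S k)) by lia.
    pose proof (C_step (n - S k) m Hm). pose proof (C_pos (n - S k + m) (m - 1)).
    lra.
Qed.

Lemma binom_weight_first_drop (m n : nat) :
  (1 <= m)%nat -> (1 <= n)%nat -> binom_weight m n 1 < binom_weight m n 0.
Proof.
  intros Hm Hn. unfold binom_weight.
  replace (n - 0)%nat with (S (n - 1)) by lia.
  pose proof (C_step (n - 1) m Hm). pose proof (C_pos (n - 1 + m) (m - 1)).
  lra.
Qed.

Definition odd_freq (k : nat) : nat := (2 * k + 1)%nat.

Lemma Ssum_pos (m n : nat) (x y : R) :
  (1 <= m)%nat -> (1 <= n)%nat -> 0 < x < PI -> 0 < y < PI -> 0 < Ssum m n x y.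
Proof.
  intros Hm Hn x_range y_range.
  set (F := cos_sum (binom_weight m n) odd_freq n).
  assert (odd_freq_nonzero : forall k, odd_freq k <> 0%nat) by (unfold odd_freq; lia).
  assert (F_decr : forall u v, 0 <= u -> u < v -> v <= PI -> F v < F u).
  { intros u v Hu Huv Hv.
    apply (strict_decrease_of_neg_derivative F
             (sin_sum (binom_weight m n) odd_freq n)); [| |exact Huv].
    - apply cos_sum_derivative, odd_freq_nonzero.
    - intros t Ht. apply odd_sine_sum_pos.
      + intros k _. now apply binom_weight_noninc.
      + apply Rlt_le, C_pos.
      + now apply binom_weight_first_drop.
      + lra. }
  assert (F (x + y) < F (x - y)).
  { apply even_reflect_decreasing_gap; auto; intros t;
      [apply cos_sum_even | apply cos_sum_reflect]. }
  unfold Ssum.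
  rewrite (sin_sin_sum_as_cos_sum (binom_weight m n) odd_freq n odd_freq_nonzero).
  fold F. lra.
Qed.

Lemma sin_sq_lt_sq (z : R) : 0 < z < PI -> sin z ^ 2 < z ^ 2.
Proof.
  intros z_range.
  assert (0 < sin z) by (apply sin_gt_0; lra).
  assert (sin z < z) by (apply sin_lt_x; lra).
  nra.
Qed.

Lemma Ssum_one_diag_bound (m : nat) (d : R) :
  0 < d <= 1 -> Ssum m 1 d d < (Binomial.C (1 + m) m + 3 * Binomial.C m m) * d ^ 2.
Proof.
  intros d_range.
  assert (three_lt_pi : 3 < PI) by (pose proof PI2_3_2; lra).
  assert (term1 : Binomial.C (S m) m * sin (1 * d) ^ 2 < Binomial.C (S m) m * (1 * d) ^ 2).
  { apply Rmult_lt_compat_l; [apply C_pos | apply sin_sq_lt_sq; lra]. }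
  assert (term3 : Binomial.C m m * sin (3 * d) ^ 2 < Binomial.C m m * (3 * d) ^ 2).
  { apply Rmult_lt_compat_l; [apply C_pos | apply sin_sq_lt_sq; lra]. }
  unfold Ssum. rewrite tech5. simpl sum_f_R0.
  replace (1 - 0 + m)%nat with (S m) by lia.
  replace (1 - 1 + m)%nat with m by lia.
  replace (INR (2 * 0 + 1)) with 1 by (simpl; ring).
  replace (INR (2 * 1 + 1)) with 3 by (simpl; ring).
  change (1 + m)%nat with (S m).
  nra.
Qed.

Lemma Ssum_arbitrarily_small (m : nat) (eps : R) :
  0 < eps -> exists (n : nat) (x y : R), (1 <= n)%nat /\ 0 < x < PI /\
    0 < y < PI /\ Ssum m n x y < eps.
Proof.
  intros eps_pos.
  set (K := Binomial.C (1 + m) m + 3 * Binomial.C m m).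
  assert (K_pos : 0 < K) by (pose proof (C_pos (1 + m) m); pose proof (C_pos m m);
                             unfold K; lra).
  set (d := Rmin 1 (eps / (2 * K))).
  assert (d_pos : 0 < d) by (apply Rmin_pos; [lra | apply Rdiv_lt_0_compat; lra]).
  assert (d_le_1 : d <= 1) by apply Rmin_l.
  assert (Kd_small : K * d <= eps / 2).
  { assert (d <= eps / (2 * K)) by apply Rmin_r.
    replace (eps / 2) with (K * (eps / (2 * K))) by (field; lra).
    apply Rmult_le_compat_l; lra. }
  assert (three_lt_pi : 3 < PI) by (pose proof PI2_3_2; lra).
  exists 1%nat, d, d.
  split; [lia|]. split; [lra|]. split; [lra|].
  pose proof (Ssum_one_diag_bound m d ltac:(lra)) as bound. fold K in bound.
  assert (K * d ^ 2 <= K * d) by (apply Rmult_le_compat_l; nra).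
  lra.
Qed.

Theorem theorem4 (m : nat) (hm : (1 <= m)%nat) :
  (forall (n : nat) (x y : R), (1 <= n)%nat ->
     0 < x < PI -> 0 < y < PI -> 0 < Ssum m n x y) /\
  (forall eps : R, 0 < eps ->
     exists (n : nat) (x y : R), (1 <= n)%nat /\ 0 < x < PI /\ 0 < y < PI /\
       Ssum m n x y < eps).
Proof.
  split.
  - intros n x y Hn Hx Hy. now apply Ssum_pos.
  - apply Ssum_arbitrarily_small.
Qed.
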